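(* Let $G$ be a finite, simple, undirected, connected graph. Then $O_{R,k}(G)$, viewed as a function of the positive integer $k$ with values in $\{\mathcal{B}=-1,\ \mathcal{N}=0,\ \mathcal{M}=1\}$, is non-decreasing in $k$.
   Context: For vertices $x,y$ of $G$, $d(x,y)$ is the shortest-path distance and $d_k(x,y)=\min\{d(x,y),k+1\}$ for a positive integer $k$. A set $S\subseteq V(G)$ is a distance-$k$ resolving set if for all distinct $x,y\in V(G)$ there exists $z\in S$ with $d_k(x,z)\neq d_k(y,z)$. The Maker-Breaker distance-$k$ resolving game (MB$k$RG) on $G$ is played by two players, Maker and Breaker, who alternately select a vertex of $G$ not yet chosen (no passing). Maker wins if the vertices he selects (at some point) form a distance-$k$ resolving set of $G$; Breaker wins if she prevents this. The $M$-game is the game in which Maker moves first, the $B$-game the one in which Breaker moves first. $O_{R,k}(G)=\mathcal{M}$ if Maker has a winning strategy in both the $M$-game and the $B$-game; $O_{R,k}(G)=\mathcal{B}$ if Breaker has a winning strategy in both; $O_{R,k}(G)=\mathcal{N}$ if the first player has a winning strategy (in both the $M$-game and the $B$-game). The outcomes are ordered $\mathcal{B}<\mathcal{N}<\mathcal{M}$, identified with $-1,0,1$. *)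

From mathcomp Require Import all_boot all_order all_algebra.
Set Implicit Arguments. Unset Strict Implicit. Unset Printing Implicit Defensive.

(* A finite simple graph: vertex type V : finType, adjacency e : rel V
   (assumed symmetric and irreflexive in the theorem). *)

Fixpoint ball (V : finType) (e : rel V) (n : nat) (x : V) : {set V} :=
  match n with
  | 0 => [set x]
  | n.+1 => ball e n x :|: [set y | [exists z in ball e n x, e z y]]
  end.

(* Shortest-path distance: least n with y within distance n of x
   (for a connected graph this is < #|V|). *)
Definition dist (V : finType) (e : rel V) (x y : V) : nat :=
  find (fun n => y \in ball e n x) (iota 0 #|V|).

Definition distk (V : finType) (e : rel V) (k : nat) (x y : V) : nat :=
  minn (dist e x y) k.+1.

Definition resolving (V : finType) (e : rel V) (k : nat) (S : {set V}) : bool :=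
  [forall x, forall y, (x != y) ==>
     [exists z in S, distk e k x z != distk e k y z]].

(* maker_wins e k fuel M B t : from the position where Maker holds M,
   Breaker holds B and it is Maker's turn iff t, Maker has a winning
   strategy (backward induction on the finite game tree; the game lasts at
   most #|V| further moves, so fuel #|V|.+1 is enough). *)
Fixpoint maker_wins (V : finType) (e : rel V) (k : nat) (fuel : nat)
    (M B : {set V}) (t : bool) : bool :=
  resolving e k M ||
  match fuel with
  | 0 => false
  | f.+1 =>
    let free := ~: (M :|: B) in
    if t then [exists v in free, maker_wins e k f (v |: M) B false]
    else (free != set0) && [forall v in free, maker_wins e k f M (v |: B) true]
  end.

Definition maker_wins_Mgame (V : finType) (e : rel V) (k : nat) : bool :=
  maker_wins e k #|V|.+1 set0 set0 true.
Definition maker_wins_Bgame (V : finType) (e : rel V) (k : nat) : bool :=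
  maker_wins e k #|V|.+1 set0 set0 false.

Definition outcome (V : finType) (e : rel V) (k : nat) : option int :=
  match maker_wins_Mgame e k, maker_wins_Bgame e k with
  | true, true => Some 1%R
  | false, false => Some (-1)%R
  | true, false => Some 0%R         (* N: first player wins both games *)
  | false, true => None
  end.

From mathcomp Require Import all_boot all_order all_algebra.
From mathcomp Require Import zify.
Set Implicit Arguments. Unset Strict Implicit. Unset Printing Implicit Defensive.
Import Num.Theory.

(* Since d_k = min (d_k', k + 1) for k <= k', vertices separated by d_k are
   separated by d_k', so every distance-k resolving set is distance-k'
   resolving and a winning strategy of Maker for k also wins for k'.  An extra
   vertex never hurts Maker, hence winning the B-game implies winning the
   M-game; the outcome is thus always defined and equals
   [M-game won] + [B-game won] - 1, which is non-decreasing in k. *)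

Section ResolvingGame.
Variables (V : finType) (e : rel V).

Local Notation free M B := (~: (M :|: B)).

Lemma resolvingP k (S : {set V}) :
  reflect (forall x y, x != y ->
             exists2 z, z \in S & distk e k x z != distk e k y z)
          (resolving e k S).
Proof.
apply: (iffP forallP) => [res x y xy | res x].
  by have /forallP/(_ y)/implyP/(_ xy)/exists_inP := res x.
by apply/forallP => y; apply/implyP => /res [z zS dz]; apply/exists_inP; exists z.
Qed.

Lemma resolvingS k (S S' : {set V}) :
  S \subset S' -> resolving e k S -> resolving e k S'.
Proof.
move=> sSS' /resolvingP res; apply/resolvingP => x y /res [z zS dz].
by exists z; first exact: (subsetP sSS').
Qed.

Lemma distk_neq_leq k k' x y z : k <= k' ->
  distk e k x z != distk e k y z -> distk e k' x z != distk e k' y z.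
Proof. by rewrite /distk => lekk'; apply: contra => /eqP eq_d; apply/eqP; lia. Qed.

Lemma resolving_leq k k' (S : {set V}) :
  k <= k' -> resolving e k S -> resolving e k' S.
Proof.
move=> lekk' /resolvingP res; apply/resolvingP => x y /res [z zS dz].
by exists z => //; exact: distk_neq_leq dz.
Qed.

Lemma maker_wins0 k (M B : {set V}) t : maker_wins e k 0 M B t = resolving e k M.
Proof. by rewrite /= orbF. Qed.

Lemma maker_winsS k f (M B : {set V}) t :
  maker_wins e k f.+1 M B t = resolving e k M ||
    (if t then [exists v in free M B, maker_wins e k f (v |: M) B false]
     else (free M B != set0) && [forall v in free M B, maker_wins e k f M (v |: B) true]).
Proof. by []. Qed.

Lemma resolving_maker_wins k f (M B : {set V}) t :
  resolving e k M -> maker_wins e k f M B t.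
Proof. by case: f => [|f] /= ->. Qed.

Lemma maker_wins_leq k k' f (M B : {set V}) t :
  k <= k' -> maker_wins e k f M B t -> maker_wins e k' f M B t.
Proof.
move=> lekk'; elim: f M B t => [|f IH] M B t.
  by rewrite !maker_wins0; exact: resolving_leq.
rewrite !maker_winsS => /orP[/(resolving_leq lekk') -> // | win]; apply/orP; right.
case: t win => [/exists_inP[v vf win] | /andP[-> /forall_inP win]].
  by apply/exists_inP; exists v => //; exact: IH.
by apply/forall_inP => v vf; apply: IH; exact: win.
Qed.

(* Maker can only ever own vertices Breaker has not taken. *)
Lemma maker_wins_resolving k f (M B : {set V}) t :
  maker_wins e k f M B t -> resolving e k (M :|: ~: B).
Proof.
have resU (M' B' : {set V}) : resolving e k M' -> resolving e k (M' :|: ~: B').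
  by apply: resolvingS; exact: subsetUl.
elim: f M B t => [|f IH] M B t; first by rewrite maker_wins0; exact: resU.
rewrite maker_winsS => /orP[/resU // | ].
case: t => [/exists_inP[v vf win] | /andP[/set0Pn[v vf] /forall_inP win]].
  apply: resolvingS (IH _ _ _ win); apply/subsetP => x.
  move: vf; rewrite !inE negb_or => /andP[_ /negPf vB].
  by case/orP=> [/orP[/eqP -> | ->] | ->]; rewrite ?vB ?orbT.
apply: resolvingS (IH _ _ _ (win v vf)); apply/subsetP => x.
by rewrite !inE negb_or => /orP[-> | /andP[_ ->]]; rewrite ?orbT.
Qed.

Section Monotonicity.
Variables (M B M' B' : {set V}).
Hypotheses (sMM' : M \subset M') (sB'B : B' \subset B).

Lemma notin_free_maker v : v \in free M B -> v \notin free M' B' -> v \in M'.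
Proof.
rewrite !inE negbK negb_or => /andP[_ vB] /orP[// | /(subsetP sB'B)].
by rewrite (negPf vB).
Qed.

Lemma notin_free_breaker v : v \in free M' B' -> v \notin free M B -> v \in B.
Proof.
rewrite !inE negbK negb_or => /andP[vM' _] /orP[/(subsetP sMM') | //].
by rewrite (negPf vM').
Qed.

Lemma free_eq0_subset : free M' B' = set0 -> M :|: ~: B \subset M'.
Proof.
move=> free0; apply/subsetP => x; rewrite !inE => /orP[/(subsetP sMM') // | xB].
have : x \notin free M' B' by rewrite free0 inE.
by rewrite !inE negbK => /orP[// | /(subsetP sB'B)]; rewrite (negPf xB).
Qed.

End Monotonicity.

(* Maker does at least as well with more vertices of his own, fewer of
   Breaker's, and more moves left; a move on an already owned vertex is
   replaced by an arbitrary free one. *)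
Lemma maker_wins_mono k f g (M B M' B' : {set V}) t :
  f <= g -> M \subset M' -> B' \subset B ->
  maker_wins e k f M B t -> maker_wins e k g M' B' t.
Proof.
elim: f g M B M' B' t => [|f IH] g M B M' B' t lefg sMM' sB'B.
  by rewrite maker_wins0 => /(resolvingS sMM'); exact: resolving_maker_wins.
move=> win; have resMB := maker_wins_resolving win.
case resM: (resolving e k M); first by apply/resolving_maker_wins/(resolvingS sMM').
case: g lefg => [// | g] lefg; rewrite maker_winsS.
have [free0 | /set0Pn[u uf']] := eqVneq (free M' B') set0.
  by rewrite (resolvingS (free_eq0_subset sMM' sB'B free0) resMB).
rewrite maker_winsS resM /= in win; apply/orP; right; move: win.
case: t => /= [/exists_inP[v vf win] | /andP[/set0Pn[v vf] /forall_inP win]].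
  have [vf' | vf'] := boolP (v \in free M' B').
    by apply/exists_inP; exists v => //; apply: IH win => //; exact: setUS.
  apply/exists_inP; exists u => //; apply: IH win => //; apply/subsetP => x.
  rewrite !inE => /orP[/eqP -> | /(subsetP sMM') ->]; last by rewrite orbT.
  by rewrite (notin_free_maker sB'B vf vf') orbT.
apply/forall_inP => w wf'; have [wf | wf] := boolP (w \in free M B).
  by apply: IH (win w wf) => //; exact: setUS.
apply: IH (win v vf) => //; apply/subsetP => x.
rewrite !inE => /orP[/eqP -> | /(subsetP sB'B) ->]; last by rewrite orbT.
by rewrite (notin_free_breaker sMM' wf' wf) orbT.
Qed.

(* Every move uses up a free vertex, so fuel beyond #|free M B| is idle. *)
Lemma maker_winsS_free k f (M B : {set V}) t :
  #|free M B| <= f -> maker_wins e k f.+1 M B t -> maker_wins e k f M B t.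
Proof.
elim: f M B t => [|f IH] M B t.
  rewrite leqn0 cards_eq0 maker_winsS maker_wins0 => /eqP ->.
  by case: t => /orP[// | ]; [case/exists_inP => v; rewrite inE | rewrite eqxx].
move=> card_free; rewrite maker_winsS [maker_wins _ _ f.+1 _ _ _]maker_winsS.
case/orP=> [-> // | win]; apply/orP; right.
have card_move (M' B' : {set V}) v :
    v \in free M B -> free M' B' \subset free M B :\ v -> #|free M' B'| <= f.
  move=> vf sub; apply: leq_trans (subset_leq_card sub) _.
  by move: card_free; rewrite (cardsD1 v) vf.
case: t win => [/exists_inP[v vf win] | /andP[-> /forall_inP win]].
  apply/exists_inP; exists v => //; apply: IH win; apply: (card_move _ _ v vf).
  by apply/subsetP => x; rewrite !inE !negb_or => /andP[/andP[-> ->] ->].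
apply/forall_inP => v vf; apply: IH (win v vf); apply: (card_move _ _ v vf).
by apply/subsetP => x; rewrite !inE !negb_or => /andP[-> /andP[-> ->]].
Qed.

(* Moving first, Maker takes any vertex and then follows his B-game strategy. *)
Lemma maker_wins_Bgame_Mgame k : maker_wins_Bgame e k -> maker_wins_Mgame e k.
Proof.
rewrite /maker_wins_Bgame /maker_wins_Mgame => win.
apply: maker_winsS_free; first by rewrite leqW // max_card.
case res0: (resolving e k set0); first exact: resolving_maker_wins.
move: (win); rewrite maker_winsS res0 => /andP[/set0Pn[v vf] _].
rewrite maker_winsS; apply/orP; right; apply/exists_inP; exists v => //.
by apply: maker_wins_mono win; rewrite ?sub0set.
Qed.

Lemma outcomeE k : outcome e k =
  Some ((maker_wins_Mgame e k + maker_wins_Bgame e k)%N%:Z - 1)%R.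
Proof.
rewrite /outcome; have := @maker_wins_Bgame_Mgame k.
by case: (maker_wins_Mgame e k); case: (maker_wins_Bgame e k) => // /(_ isT).
Qed.

End ResolvingGame.

Theorem proposition2p4 (V : finType) (e : rel V) :
  symmetric e -> irreflexive e -> (forall x y : V, connect e x y) ->
  forall k k' : nat, 0 < k -> k <= k' ->
  exists o o' : int,
    outcome e k = Some o /\ outcome e k' = Some o' /\ (o <= o')%R.
Proof.
move=> _ _ _ k k' _ lekk'.
do 2 eexists; split; first exact: outcomeE; split; first exact: outcomeE.
have leq_implyb (b b' : bool) : b ==> b' -> b <= b' by case: b; case: b'.
rewrite lerD2r lez_nat leq_add // leq_implyb //; apply/implyP; exact: maker_wins_leq.
Qed.
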